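(* Let $X_1,\dots,X_n$ be finitely many topological spaces and $f\colon X_1\times\dots\times X_n\to Y$ a separately continuous map into a topological space $Y$. If $\mathcal C$ is an epireflective subcategory of $\mathbf{Top}$, then there is a (necessarily unique) separately continuous map $\overline f\colon\mathrm{r}_{\mathcal C}X_1\times\dots\times\mathrm{r}_{\mathcal C}X_n\to\mathrm{r}_{\mathcal C}Y$ such that $\overline f(\mathrm{r}_{(X_1,\mathcal C)}(x_1),\dots,\mathrm{r}_{(X_n,\mathcal C)}(x_n))=\mathrm{r}_{(Y,\mathcal C)}(f(x_1,\dots,x_n))$ for all $x_i\in X_i$.
   Context: An epireflective subcategory $\mathcal C$ of $\mathbf{Top}$ is a full, isomorphism-closed subcategory closed under products and subspaces; each space $X$ has a reflection $\mathrm{r}_{\mathcal C}X\in\mathcal C$ with a continuous surjection $\mathrm{r}_{(X,\mathcal C)}\colon X\to\mathrm{r}_{\mathcal C}X$ through which every continuous map from $X$ into a space of $\mathcal C$ factors uniquely. A map on a product is separately continuous if it is continuous in each variable when all other variables are fixed. *)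

From HB Require Import structures.
From mathcomp Require Import all_boot all_order all_algebra.
From mathcomp Require Import all_classical all_reals all_analysis.

Set Implicit Arguments.
Unset Strict Implicit.
Unset Printing Implicit Defensive.

Local Open Scope classical_set_scope.

Definition homeomorphic (S T : topologicalType) : Prop :=
  exists (f : S -> T) (g : T -> S),
    [/\ continuous f, continuous g, cancel f g & cancel g f].

(** An epireflective subcategory of Top, given by its class of objects:
    (full by convention) isomorphism-closed, closed under (arbitrary)
    products and under subspaces. *)
Record epireflective (C : topologicalType -> Prop) : Prop := {
  epi_iso : forall S T : topologicalType, homeomorphic S T -> C S -> C T;
  epi_prod : forall (I : Type) (T : I -> topologicalType),
      (forall i, C (T i)) -> C (prod_topology T : topologicalType);
  epi_sub : forall (T : topologicalType) (A : set T),
      C T -> C (set_type A : topologicalType)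
}.

Definition is_reflection (C : topologicalType -> Prop)
    (X RX : topologicalType) (q : X -> RX) : Prop :=
  [/\ C RX, continuous q, (forall y : RX, exists x : X, q x = y) &
      forall (Z : topologicalType), C Z -> forall g : X -> Z, continuous g ->
        exists! h : RX -> Z, continuous h /\ h \o q = g].

Definition separately_continuous {I : eqType} (T : I -> topologicalType)
    (Y : topologicalType) (f : (forall i, T i) -> Y) : Prop :=
  forall (a : forall i, T i) (i : I),
    continuous (fun x : T i => f (@dfwith I T a i x)).

Arguments is_reflection : clear implicits.
Arguments separately_continuous {I} T Y f.

From HB Require Import structures.
From mathcomp Require Import all_boot all_order all_algebra.
From mathcomp Require Import all_classical all_reals all_analysis.

(* For fixed values of the other variables, [x_i |-> r_Y (f x)] is a continuous
   map into a space of C, so it factors through [r_(X_i)]; hence [r_Y o f] is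
   constant on the fibres of [r_(X_i)] in each variable separately, and, changing
   one coordinate at a time, on the fibres of the product map. It therefore
   descends along the (surjective) product of the reflections, and the descended
   map is continuous in the i-th variable because, with the other variables
   fixed, it is the factorisation of a continuous map through [r_(X_i)]. *)

Definition prod_map {I : Type} {A B : I -> Type} (q : forall i, A i -> B i)
    (x : forall i, A i) : forall i, B i :=
  fun i => q i (x i).

Lemma prod_map_surjective {I : Type} {A B : I -> Type} (q : forall i, A i -> B i) :
    (forall i (b : B i), exists a, q i a = b) ->
  forall y : forall i, B i, exists x, prod_map q x = y.
Proof.
move=> q_surj y; exists (fun i => sval (cid (q_surj i (y i)))).
by apply: functional_extensionality_dep => i; exact: svalP (cid (q_surj i (y i))).
Qed.

Lemma prod_map_dfwith {I : eqType} {A B : I -> Type} (q : forall i, A i -> B i)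
    (x : forall i, A i) (i : I) (a : A i) :
  prod_map q (dfwith x i a) = dfwith (prod_map q x) i (q i a).
Proof.
apply: functional_extensionality_dep => j; rewrite /prod_map.
by case: dfwithP => [|k ik]; rewrite ?dfwithin ?dfwithout.
Qed.

Lemma dfwith_self {I : eqType} {A : I -> Type} (x : forall i, A i) (i : I) :
  dfwith x i (x i) = x.
Proof. by apply: functional_extensionality_dep => j; case: dfwithP. Qed.

Section CoordinatewiseInvariance.
Variables (I : finType) (A B : I -> Type) (q : forall i, A i -> B i) (Z : Type).
Variable F : (forall i, A i) -> Z.
Hypothesis F_dfwith_invariant : forall (x : forall i, A i) i (a b : A i),
  q i a = q i b -> F (dfwith x i a) = F (dfwith x i b).

Lemma prod_map_invariant x y : prod_map q x = prod_map q y -> F x = F y.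
Proof.
move=> qxy.
pose mix (s : seq I) : forall i, A i := fun i => if i \in s then y i else x i.
suff F_mix s : F x = F (mix s).
  have -> : y = mix (enum I).
    by apply: functional_extensionality_dep => i; rewrite /mix mem_enum.
  exact: F_mix.
elim: s => [|j s ->]; first by congr F; apply: functional_extensionality_dep.
have -> : mix (j :: s) = dfwith (mix s) j (y j).
  apply: functional_extensionality_dep => i.
  by rewrite /mix in_cons; case: dfwithP => [|i' ji]; rewrite ?eqxx // eq_sym (negbTE ji).
rewrite -{1}(dfwith_self (mix s) j); apply: F_dfwith_invariant.
rewrite /mix; case: ifP => // _.
exact: (congr1 (fun z => z j) qxy).
Qed.

End CoordinatewiseInvariance.

Section Reflection.
Variables (C : topologicalType -> Prop) (X RX : topologicalType) (q : X -> RX).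
Hypothesis q_refl : is_reflection C X RX q.
Variables (Z : topologicalType) (CZ : C Z).

Lemma reflection_fibre_eq (g : X -> Z) : continuous g ->
  forall a b, q a = q b -> g a = g b.
Proof.
move=> g_cont a b qab; have [_ _ _ /(_ Z CZ g g_cont) [h [[_ hqg] _]]] := q_refl.
by rewrite -hqg /= qab.
Qed.

Lemma reflection_continuous_lift (k : RX -> Z) : continuous (k \o q) -> continuous k.
Proof.
move=> kq_cont; have [_ _ q_surj /(_ Z CZ _ kq_cont) [h [[h_cont hqk] _]]] := q_refl.
suff -> : k = h by [].
apply: funext => r; have [a <-] := q_surj r.
by rewrite -[k (q a)]/((k \o q) a) -hqk.
Qed.

End Reflection.

Arguments reflection_fibre_eq {C X RX q} q_refl {Z} CZ [g].
Arguments reflection_continuous_lift {C X RX q} q_refl {Z} CZ [k].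

Section Descent.
Variables (C : topologicalType -> Prop) (I : finType).
Variables (X RX : I -> topologicalType) (q : forall i, X i -> RX i).
Hypothesis q_refl : forall i, is_reflection C (X i) (RX i) (q i).
Variables (Z : topologicalType) (CZ : C Z) (g : (forall i, X i) -> Z).
Hypothesis g_sep : separately_continuous X Z g.

Let q_prod_surj : forall r, exists x, prod_map q x = r.
Proof. by apply: prod_map_surjective => i; case: (q_refl i). Qed.

Lemma separately_continuous_prod_map_invariant x y :
  prod_map q x = prod_map q y -> g x = g y.
Proof.
apply: prod_map_invariant => a i s t.
exact: (reflection_fibre_eq (q_refl i) CZ (g_sep a i)).
Qed.

Lemma separately_continuous_reflection_descent :
  exists! gbar : (forall i, RX i) -> Z,
    separately_continuous RX Z gbar /\ forall x, gbar (prod_map q x) = g x.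
Proof.
pose gbar r := g (sval (cid (q_prod_surj r))).
have gbarK x : gbar (prod_map q x) = g x.
  apply: separately_continuous_prod_map_invariant.
  exact: svalP (cid (q_prod_surj (prod_map q x))).
exists gbar; split; first split => //.
- move=> r i; have [x <-] := q_prod_surj r.
  apply: (reflection_continuous_lift (q_refl i) CZ).
  suff -> : (fun t => gbar (dfwith (prod_map q x) i t)) \o q i = fun s => g (dfwith x i s).
    exact: g_sep.
  by apply: funext => s /=; rewrite -prod_map_dfwith gbarK.
- move=> h [_ hqg]; apply: funext => r; have [x <-] := q_prod_surj r.
  by rewrite gbarK hqg.
Qed.

End Descent.

Arguments separately_continuous_reflection_descent {C I X RX q} q_refl {Z} CZ [g].

Theorem corollary3p8 (C : topologicalType -> Prop) (hC : epireflective C)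
    (n : nat) (X : 'I_n -> topologicalType) (Y : topologicalType)
    (RX : 'I_n -> topologicalType) (qX : forall i, X i -> RX i)
    (hX : forall i, is_reflection C (X i) (RX i) (qX i))
    (RY : topologicalType) (qY : Y -> RY) (hY : is_reflection C Y RY qY)
    (f : (forall i, X i) -> Y) (hf : separately_continuous X Y f) :
  exists! fbar : (forall i, RX i) -> RY,
    separately_continuous RX RY fbar /\
    forall x : forall i, X i, fbar (fun i => qX i (x i)) = qY (f x).
Proof.
have [CRY qY_cont _ _] := hY.
have qYf_sep : separately_continuous X RY (qY \o f).
  by move=> a i x; apply: continuous_comp; [exact: hf | exact: qY_cont].
apply: (separately_continuous_reflection_descent hX CRY qYf_sep).
Qed.
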